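(* Let $A\in\mathbb{R}^{N\times N}$, $C\in\mathbb{R}^{N\times D}$, $K<\min(N,D)$, $\alpha,\beta>0$ and $\mu=1$. Consider the joint loss $$\mathcal{L}(G,H,U,V,W,O)=\mathcal{L}_{str}+\alpha\,\mathcal{L}_{attr}+\beta\,\mathcal{L}_{dis},$$ where $$\mathcal{L}_{str}=\sum_{i=1}^N\sum_{j=1}^N\log\!\Big(\tfrac{1}{O_{1i}}\Big)\big(A_{ij}-(GH)_{ij}\big)^2,\qquad \mathcal{L}_{attr}=\sum_{i=1}^N\sum_{d=1}^D\log\!\Big(\tfrac{1}{O_{2i}}\Big)\big(C_{id}-(UV)_{id}\big)^2,$$ $$\mathcal{L}_{dis}=\sum_{i=1}^N\sum_{k=1}^K\log\!\Big(\tfrac{1}{O_{3i}}\Big)\big(G_{ik}-(UW^T)_{ik}\big)^2,$$ with $G,U\in\mathbb{R}^{N\times K}$, $H\in\mathbb{R}^{K\times N}$, $V\in\mathbb{R}^{K\times D}$, $W\in\mathbb{R}^{K\times K}$ orthogonal ($W^TW=I$), and $O=(O_{1i},O_{2i},O_{3i})_{i=1}^N$ satisfying $0<O_{ri}\le 1$ and $\sum_{i=1}^N O_{ri}=\mu$ for $r=1,2,3$. One iteration of ONE performs, in order: (i) replace $W$ by $XY^T$, where $X\Sigma Y^T$ is a singular value decomposition of $\bar G^T\bar U$, with $\bar G_{ik}=\sqrt{\log(1/O_{3i})}\,G_{ik}$ and $\bar U_{ik}=\sqrt{\log(1/O_{3i})}\,U_{ik}$; (ii) replace, one scalar entry at a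 time, each entry of $G$, $H$, $U$, $V$ by the value minimizing $\mathcal{L}$ in that entry with all other variables fixed; (iii) replace the outlier scores by $$O_{1i}=\frac{\mu\sum_{j}(A_{ij}-(GH)_{ij})^2}{\sum_{i',j}(A_{i'j}-(GH)_{i'j})^2},\quad O_{2i}=\frac{\mu\sum_{d}(C_{id}-(UV)_{id})^2}{\sum_{i',d}(C_{i'd}-(UV)_{i'd})^2},\quad O_{3i}=\frac{\mu\sum_{k}(G_{ik}-(UW^T)_{ik})^2}{\sum_{i',k}(G_{i'k}-(UW^T)_{i'k})^2}.$$ Assume that throughout, every row residual appearing in the numerators in (iii) is strictly positive (so that all scores lie in $(0,1]$, except that a score equal to $1$ makes the corresponding weight $0$, which is allowed), and that the minimizers in (ii) exist (e.g. the relevant denominators are positive). Then the value of $\mathcal{L}$ after one iteration is no larger than its value before the iteration; i.e. $\mathcal{L}$ is non-increasing along the iterations of ONE.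
   Context: ONE (Outlier aware Network Embedding) is an alternating minimization scheme for an attributed network with adjacency matrix $A$ (row $i$ describes node $v_i$'s neighbors) and attribute matrix $C$ (row $i$ is the attribute vector of node $v_i$). $G$ is the structural embedding, $U$ the attribute embedding, $W$ an orthogonal map aligning the two embedding spaces, and $O_{1i},O_{2i},O_{3i}$ are the structural, attribute and disagreement outlier scores of node $v_i$. $\mu$ is the total outlier score, set to $1$. *)

From Stdlib Require Import Reals List.
Open Scope R_scope.

Fixpoint sumR (n : nat) (f : nat -> R) : R :=
  match n with O => 0 | S m => sumR m f + f m end.

(* Matrices are functions nat -> nat -> R; only entries inside the stated
   dimensions are ever used. Vectors of outlier scores are nat -> R. *)
Definition mat := nat -> nat -> R.

Definition mu : R := 1.

Definition mmul (K : nat) (P Q : mat) (i j : nat) : R :=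
  sumR K (fun k => P i k * Q k j).
Definition mmulT (K : nat) (P Q : mat) (i j : nat) : R :=
  sumR K (fun k => P i k * Q j k).

Record state := mkState {
  sG : mat; sH : mat; sU : mat; sV : mat; sW : mat;
  sO1 : nat -> R; sO2 : nat -> R; sO3 : nat -> R }.

Definition L_str (N K : nat) (A : mat) (s : state) : R :=
  sumR N (fun i => sumR N (fun j =>
    ln (1 / sO1 s i) * (A i j - mmul K (sG s) (sH s) i j) ^ 2)).
Definition L_attr (N D K : nat) (C : mat) (s : state) : R :=
  sumR N (fun i => sumR D (fun d =>
    ln (1 / sO2 s i) * (C i d - mmul K (sU s) (sV s) i d) ^ 2)).
Definition L_dis (N K : nat) (s : state) : R :=
  sumR N (fun i => sumR K (fun k =>
    ln (1 / sO3 s i) * (sG s i k - mmulT K (sU s) (sW s) i k) ^ 2)).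

Definition Loss (N D K : nat) (A C : mat) (alpha beta : R) (s : state) : R :=
  L_str N K A s + alpha * L_attr N D K C s + beta * L_dis N K s.

Definition res_str (N K : nat) (A : mat) (s : state) (i : nat) : R :=
  sumR N (fun j => (A i j - mmul K (sG s) (sH s) i j) ^ 2).
Definition res_attr (D K : nat) (C : mat) (s : state) (i : nat) : R :=
  sumR D (fun d => (C i d - mmul K (sU s) (sV s) i d) ^ 2).
Definition res_dis (K : nat) (s : state) (i : nat) : R :=
  sumR K (fun k => (sG s i k - mmulT K (sU s) (sW s) i k) ^ 2).

Definition feasible_scores (N : nat) (O : nat -> R) : Prop :=
  (forall i, (i < N)%nat -> 0 < O i <= 1) /\ sumR N O = mu.

Definition orthogonal (K : nat) (W : mat) : Prop :=
  forall k l, (k < K)%nat -> (l < K)%nat ->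
    sumR K (fun m => W m k * W m l) = if Nat.eqb k l then 1 else 0.

Definition is_svd (K : nat) (M X Sig Y : mat) : Prop :=
  orthogonal K X /\ orthogonal K Y /\
  (forall a b, (a < K)%nat -> (b < K)%nat -> a <> b -> Sig a b = 0) /\
  (forall a, (a < K)%nat -> 0 <= Sig a a) /\
  (forall i j, (i < K)%nat -> (j < K)%nat ->
     M i j = sumR K (fun a => sumR K (fun b => X i a * Sig a b * Y j b))).

Definition Gbar (s : state) : mat := fun i k => sqrt (ln (1 / sO3 s i)) * sG s i k.
Definition Ubar (s : state) : mat := fun i k => sqrt (ln (1 / sO3 s i)) * sU s i k.
Definition GbarT_Ubar (N : nat) (s : state) : mat :=
  fun k l => sumR N (fun i => Gbar s i k * Ubar s i l).

Definition W_update (N K : nat) (s : state) (W' : mat) : Prop :=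
  exists X Sig Y, is_svd K (GbarT_Ubar N s) X Sig Y /\
    forall k l, (k < K)%nat -> (l < K)%nat ->
      W' k l = sumR K (fun m => X k m * Y l m).

Definition setW (s : state) (W' : mat) : state :=
  mkState (sG s) (sH s) (sU s) (sV s) W' (sO1 s) (sO2 s) (sO3 s).

Inductive coord : Type :=
| cG (i k : nat) | cH (k j : nat) | cU (i k : nat) | cV (k d : nat).

Definition valid_coord (N D K : nat) (c : coord) : Prop :=
  match c with
  | cG i k => (i < N)%nat /\ (k < K)%nat
  | cH k j => (k < K)%nat /\ (j < N)%nat
  | cU i k => (i < N)%nat /\ (k < K)%nat
  | cV k d => (k < K)%nat /\ (d < D)%nat
  end.

Definition upd (M : mat) (a b : nat) (x : R) : mat :=
  fun i j => if andb (Nat.eqb i a) (Nat.eqb j b) then x else M i j.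

Definition setc (s : state) (c : coord) (x : R) : state :=
  match c with
  | cG a b => mkState (upd (sG s) a b x) (sH s) (sU s) (sV s) (sW s) (sO1 s) (sO2 s) (sO3 s)
  | cH a b => mkState (sG s) (upd (sH s) a b x) (sU s) (sV s) (sW s) (sO1 s) (sO2 s) (sO3 s)
  | cU a b => mkState (sG s) (sH s) (upd (sU s) a b x) (sV s) (sW s) (sO1 s) (sO2 s) (sO3 s)
  | cV a b => mkState (sG s) (sH s) (sU s) (upd (sV s) a b x) (sW s) (sO1 s) (sO2 s) (sO3 s)
  end.

Inductive cd_chain (f : state -> R) : state -> list coord -> state -> Prop :=
| cd_nil : forall s, cd_chain f s nil s
| cd_cons : forall s c cs x s',
    (forall y, f (setc s c x) <= f (setc s c y)) ->
    cd_chain f (setc s c x) cs s' ->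
    cd_chain f s (c :: cs) s'.

Definition O_update (N D K : nat) (A C : mat) (s : state) : state :=
  mkState (sG s) (sH s) (sU s) (sV s) (sW s)
    (fun i => mu * res_str N K A s i / sumR N (res_str N K A s))
    (fun i => mu * res_attr D K C s i / sumR N (res_attr D K C s))
    (fun i => mu * res_dis K s i / sumR N (res_dis K s)).

From Stdlib Require Import Reals List Lra Lia FunctionalExtensionality.
Open Scope R_scope.

(* Each step of ONE minimises the loss exactly over one block of variables, so none
   can increase it.  In step (i) only [L_dis] depends on [W]: its quadratic term
   [|U W^T|^2] does not grow for [W = X Y^T], because [X^T X = Y^T Y = I] makes
   [v |-> X Y^T v] a contraction, and its cross term [<W, Gbar^T Ubar>] is maximised
   among orthogonal [W] by [X Y^T] (orthogonal Procrustes).  Step (ii) is coordinate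
   descent.  In step (iii) each part of the loss reads [sum_i ln (1 / O_i) r_i] for
   fixed row residuals [r], and Gibbs' inequality ([ln y <= y - 1]) shows that
   [O_i = mu r_i / sum r] minimises it over scores of total [mu]. *)

Lemma sumR_ext n f g : (forall i, (i < n)%nat -> f i = g i) -> sumR n f = sumR n g.
Proof.
  induction n as [|n IH]; intros Hfg; simpl; [reflexivity|].
  rewrite IH by (intros; apply Hfg; lia).
  rewrite Hfg by lia; reflexivity.
Qed.

Lemma sumR_le n f g : (forall i, (i < n)%nat -> f i <= g i) -> sumR n f <= sumR n g.
Proof.
  induction n as [|n IH]; intros Hfg; simpl; [lra|].
  pose proof (Hfg n (Nat.lt_succ_diag_r n)).
  assert (sumR n f <= sumR n g) by (apply IH; intros; apply Hfg; lia).
  lra.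
Qed.

Lemma sumR_add n f g : sumR n (fun i => f i + g i) = sumR n f + sumR n g.
Proof. induction n as [|n IH]; simpl; [lra|]. rewrite IH; ring. Qed.

Lemma sumR_sub n f g : sumR n (fun i => f i - g i) = sumR n f - sumR n g.
Proof. induction n as [|n IH]; simpl; [lra|]. rewrite IH; ring. Qed.

Lemma sumR_mull n c f : sumR n (fun i => c * f i) = c * sumR n f.
Proof. induction n as [|n IH]; simpl; [lra|]. rewrite IH; ring. Qed.

Lemma sumR_mulr n c f : sumR n (fun i => f i * c) = sumR n f * c.
Proof. induction n as [|n IH]; simpl; [lra|]. rewrite IH; ring. Qed.

Lemma sumR_zero n : sumR n (fun _ => 0) = 0.
Proof. induction n as [|n IH]; simpl; [lra|]. rewrite IH; ring. Qed.

Lemma sumR_exchange n m (f : nat -> nat -> R) :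
  sumR n (fun i => sumR m (fun j => f i j)) = sumR m (fun j => sumR n (fun i => f i j)).
Proof.
  induction n as [|n IH]; simpl.
  - symmetry; apply sumR_zero.
  - rewrite IH, <- sumR_add; reflexivity.
Qed.

Lemma sumR_mul_sumR n m f g :
  sumR n f * sumR m g = sumR n (fun i => sumR m (fun j => f i * g j)).
Proof.
  rewrite <- sumR_mulr. apply sumR_ext; intros.
  rewrite <- sumR_mull; reflexivity.
Qed.

Lemma sumR_kronecker n a f : (a < n)%nat ->
  sumR n (fun b => (if Nat.eqb a b then 1 else 0) * f b) = f a.
Proof.
  induction n as [|n IH]; intros Ha; simpl; [lia|].
  destruct (Nat.eqb_spec a n) as [->|Hne].
  - rewrite (sumR_ext n _ (fun _ => 0)), sumR_zero; [ring|].
    intros i Hi. destruct (Nat.eqb_spec n i); [lia|ring].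
  - rewrite IH by lia; ring.
Qed.

Lemma sumR_ge0 n f : (forall i, (i < n)%nat -> 0 <= f i) -> 0 <= sumR n f.
Proof. intros Hf. rewrite <- (sumR_zero n). apply sumR_le; exact Hf. Qed.

Lemma sumR_gt0 n f : (0 < n)%nat -> (forall i, (i < n)%nat -> 0 < f i) -> 0 < sumR n f.
Proof.
  destruct n as [|n]; [lia|]. intros _ Hf; simpl.
  pose proof (Hf n (Nat.lt_succ_diag_r n)).
  assert (0 <= sumR n f) by (apply sumR_ge0; intros; left; apply Hf; lia).
  lra.
Qed.

Definition sqnorm (K : nat) (v : nat -> R) : R := sumR K (fun k => v k ^ 2).

Definition mxv (K : nat) (W : mat) (v : nat -> R) (k : nat) : R :=
  sumR K (fun m => W k m * v m).

Definition trmxv (K : nat) (W : mat) (v : nat -> R) (c : nat) : R :=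
  sumR K (fun m => W m c * v m).

Lemma sqnorm_col_orthogonal K X a : orthogonal K X -> (a < K)%nat ->
  sqnorm K (fun k => X k a) = 1.
Proof.
  intros HX Ha. unfold sqnorm.
  rewrite (sumR_ext K _ (fun k => X k a * X k a)) by (intros; ring).
  rewrite (HX a a Ha Ha), Nat.eqb_refl; reflexivity.
Qed.

Lemma sqnorm_mxv_orthogonal K W v : orthogonal K W ->
  sqnorm K (mxv K W v) = sqnorm K v.
Proof.
  intros HW. unfold sqnorm, mxv.
  rewrite (sumR_ext K _ (fun k => sumR K (fun m => sumR K (fun m' =>
             (W k m * W k m') * (v m * v m'))))).
  2:{ intros k _. rewrite <- Rsqr_pow2; unfold Rsqr; rewrite sumR_mul_sumR.
      apply sumR_ext; intros; apply sumR_ext; intros; ring. }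
  rewrite sumR_exchange. apply sumR_ext; intros m Hm.
  rewrite sumR_exchange.
  rewrite (sumR_ext K _ (fun m' => (if Nat.eqb m m' then 1 else 0) * (v m * v m'))).
  - rewrite sumR_kronecker by exact Hm; ring.
  - intros m' Hm'. rewrite <- (HW m m' Hm Hm'), sumR_mulr; reflexivity.
Qed.

Lemma sumR_mul_le_sqnorm K x v :
  sumR K (fun k => x k * v k) <= (sqnorm K x + sqnorm K v) / 2.
Proof.
  assert (Hsq : 0 <= sumR K (fun k => (x k - v k) ^ 2))
    by (apply sumR_ge0; intros; apply pow2_ge_0).
  rewrite (sumR_ext K _ (fun k => x k ^ 2 + v k ^ 2 - 2 * (x k * v k))) in Hsq
    by (intros; ring).
  rewrite sumR_sub, sumR_add, sumR_mull in Hsq. unfold sqnorm. lra.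
Qed.

(* Only [W^T W = I] is available, so [W^T] is a contraction rather than an isometry:
   [u] minus its projection [W (W^T u)] has nonnegative squared norm. *)
Lemma sqnorm_trmxv_le K W u : orthogonal K W ->
  sqnorm K (trmxv K W u) <= sqnorm K u.
Proof.
  intros HW. set (v := trmxv K W u).
  assert (Hsq : 0 <= sumR K (fun m => (u m - mxv K W v m) ^ 2))
    by (apply sumR_ge0; intros; apply pow2_ge_0).
  rewrite (sumR_ext K _ (fun m => u m ^ 2 + mxv K W v m ^ 2 - 2 * (u m * mxv K W v m)))
    in Hsq by (intros; ring).
  rewrite sumR_sub, sumR_add, sumR_mull in Hsq.
  change (sumR K (fun m => mxv K W v m ^ 2)) with (sqnorm K (mxv K W v)) in Hsq.
  rewrite sqnorm_mxv_orthogonal in Hsq by exact HW.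
  assert (Hcross : sumR K (fun m => u m * mxv K W v m) = sqnorm K v).
  { unfold mxv, sqnorm.
    rewrite (sumR_ext K _ (fun m => sumR K (fun c => v c * (W m c * u m)))).
    2:{ intros. rewrite <- sumR_mull. apply sumR_ext; intros; ring. }
    rewrite sumR_exchange. apply sumR_ext; intros c _.
    rewrite sumR_mull. unfold v, trmxv. ring. }
  rewrite Hcross in Hsq. unfold sqnorm in *. lra.
Qed.

Definition mx_inner (K : nat) (P Q : mat) : R :=
  sumR K (fun k => sumR K (fun m => P k m * Q k m)).

Definition bilin (K : nat) (x : nat -> R) (W : mat) (y : nat -> R) : R :=
  sumR K (fun k => sumR K (fun m => x k * W k m * y m)).

Lemma svd_entry K M X Sig Y k m : is_svd K M X Sig Y -> (k < K)%nat -> (m < K)%nat ->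
  M k m = sumR K (fun a => Sig a a * (X k a * Y m a)).
Proof.
  intros (_ & _ & Hoff & _ & HM) Hk Hm. rewrite HM by assumption.
  apply sumR_ext; intros a Ha.
  rewrite (sumR_ext K _ (fun b => (if Nat.eqb a b then 1 else 0) * (X k a * Sig a b * Y m b))).
  - rewrite sumR_kronecker by exact Ha; ring.
  - intros b Hb. destruct (Nat.eqb_spec a b) as [<-|Hab]; [ring|].
    rewrite Hoff by assumption; ring.
Qed.

Lemma mx_inner_svd K M X Sig Y W : is_svd K M X Sig Y ->
  mx_inner K W M = sumR K (fun a => Sig a a * bilin K (fun k => X k a) W (fun m => Y m a)).
Proof.
  intros Hsvd. unfold mx_inner, bilin.
  rewrite (sumR_ext K _ (fun k => sumR K (fun a => sumR K (fun m =>
             Sig a a * (X k a * W k m * Y m a))))).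
  2:{ intros k Hk. rewrite sumR_exchange. apply sumR_ext; intros m Hm.
      rewrite (svd_entry K M X Sig Y k m) by assumption.
      rewrite <- sumR_mull. apply sumR_ext; intros; ring. }
  rewrite sumR_exchange. apply sumR_ext; intros a _.
  rewrite <- sumR_mull. apply sumR_ext; intros k _. rewrite sumR_mull; reflexivity.
Qed.

Lemma bilin_orthogonal_le1 K X Y W a :
  orthogonal K X -> orthogonal K Y -> orthogonal K W -> (a < K)%nat ->
  bilin K (fun k => X k a) W (fun m => Y m a) <= 1.
Proof.
  intros HX HY HW Ha. unfold bilin.
  rewrite (sumR_ext K _ (fun k => X k a * mxv K W (fun m => Y m a) k)).
  2:{ intros. unfold mxv. rewrite <- sumR_mull. apply sumR_ext; intros; ring. }
  eapply Rle_trans; [apply sumR_mul_le_sqnorm|].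
  rewrite sqnorm_mxv_orthogonal, !sqnorm_col_orthogonal by assumption. lra.
Qed.

Lemma bilin_mmulT_svd K X Y a : orthogonal K X -> orthogonal K Y -> (a < K)%nat ->
  bilin K (fun k => X k a) (mmulT K X Y) (fun m => Y m a) = 1.
Proof.
  intros HX HY Ha. unfold bilin, mmulT.
  rewrite (sumR_ext K _ (fun k => sumR K (fun c => sumR K (fun m =>
             (X k a * X k c) * (Y m a * Y m c))))).
  2:{ intros k _. rewrite sumR_exchange. apply sumR_ext; intros m _.
      rewrite <- sumR_mull, <- sumR_mulr. apply sumR_ext; intros; ring. }
  rewrite sumR_exchange.
  rewrite (sumR_ext K _ (fun c => (if Nat.eqb a c then 1 else 0) * (if Nat.eqb a c then 1 else 0))).
  - rewrite sumR_kronecker, Nat.eqb_refl by exact Ha; ring.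
  - intros c Hc; cbv beta.
    rewrite <- (HX a c Ha Hc) at 1. rewrite <- (HY a c Ha Hc), sumR_mul_sumR; reflexivity.
Qed.

(* Orthogonal Procrustes: writing [M = X Sig Y^T], [<W, M> = sum_a Sig_aa x_a^T W y_a],
   and each [x_a^T W y_a] is at most 1, with equality for [W = X Y^T]. *)
Lemma procrustes K M X Sig Y W : is_svd K M X Sig Y -> orthogonal K W ->
  mx_inner K W M <= mx_inner K (mmulT K X Y) M.
Proof.
  intros Hsvd HW. rewrite !(mx_inner_svd K M X Sig Y) by exact Hsvd.
  destruct Hsvd as (HX & HY & _ & Hpos & _).
  apply sumR_le; intros a Ha.
  rewrite bilin_mmulT_svd by assumption.
  pose proof (bilin_orthogonal_le1 K X Y W a HX HY HW Ha).
  pose proof (Hpos a Ha). nra.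
Qed.

Lemma ln_le_sub_1 y : 0 < y -> ln y <= y - 1.
Proof.
  intros Hy. rewrite <- (exp_ln y Hy) at 2.
  pose proof (exp_ineq1_le (ln y)). lra.
Qed.

Lemma ln_inv_ge0 o : 0 < o <= 1 -> 0 <= ln (1 / o).
Proof.
  intros Ho. unfold Rdiv. rewrite Rmult_1_l, ln_Rinv by lra.
  pose proof (ln_le_sub_1 o (proj1 Ho)). lra.
Qed.

Lemma sqnorm_mmulT_row K U W i :
  sqnorm K (mmulT K U W i) = sqnorm K (mxv K W (U i)).
Proof.
  apply sumR_ext; intros k _. unfold mmulT, mxv.
  rewrite (sumR_ext K (fun m => U i m * W k m) (fun m => W k m * U i m))
    by (intros; ring).
  reflexivity.
Qed.

Lemma sqnorm_mxv_mmulT_le K X Y u : orthogonal K X -> orthogonal K Y ->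
  sqnorm K (mxv K (mmulT K X Y) u) <= sqnorm K u.
Proof.
  intros HX HY.
  assert (Hfact : sqnorm K (mxv K (mmulT K X Y) u) = sqnorm K (mxv K X (trmxv K Y u))).
  { apply sumR_ext; intros k _. unfold mxv, mmulT, trmxv.
    rewrite (sumR_ext K _ (fun m => sumR K (fun c => X k c * (Y m c * u m)))).
    - rewrite sumR_exchange.
      rewrite (sumR_ext K (fun c => sumR K (fun m => X k c * (Y m c * u m)))
                 (fun c => X k c * sumR K (fun m => Y m c * u m)))
        by (intros; apply sumR_mull).
      reflexivity.
    - intros m _. rewrite <- sumR_mulr. apply sumR_ext; intros; ring. }
  rewrite Hfact, sqnorm_mxv_orthogonal by exact HX.
  apply sqnorm_trmxv_le; exact HY.
Qed.

(* Nonnegative weights give [sqrt w_i * sqrt w_i = w_i], which turns the cross term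
   into [<W, Gbar^T Ubar>]. *)
Lemma L_dis_expand N K s : (forall i, (i < N)%nat -> 0 <= ln (1 / sO3 s i)) ->
  L_dis N K s =
    sumR N (fun i => ln (1 / sO3 s i) * sqnorm K (sG s i))
  + sumR N (fun i => ln (1 / sO3 s i) * sqnorm K (mmulT K (sU s) (sW s) i))
  - 2 * mx_inner K (sW s) (GbarT_Ubar N s).
Proof.
  intros Hw. set (w := fun i => ln (1 / sO3 s i)). unfold L_dis.
  rewrite (sumR_ext N _ (fun i => w i * sqnorm K (sG s i)
     + w i * sqnorm K (mmulT K (sU s) (sW s) i)
     - 2 * sumR K (fun k => w i * sG s i k * mmulT K (sU s) (sW s) i k))).
  2:{ intros i _. unfold sqnorm. rewrite <- !sumR_mull, <- sumR_add, <- sumR_sub.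
      apply sumR_ext; intros; unfold w; ring. }
  rewrite sumR_sub, sumR_add, sumR_mull. f_equal. f_equal.
  unfold mx_inner, GbarT_Ubar, Gbar, Ubar, mmulT.
  rewrite (sumR_ext N _ (fun i => sumR K (fun k => sumR K (fun m =>
             sW s k m * (w i * sG s i k * sU s i m))))).
  2:{ intros i _. apply sumR_ext; intros k _.
      rewrite <- sumR_mull. apply sumR_ext; intros; ring. }
  rewrite sumR_exchange. apply sumR_ext; intros k _. rewrite sumR_exchange.
  apply sumR_ext; intros m _. rewrite <- sumR_mull. apply sumR_ext; intros i Hi.
  unfold w. rewrite <- (sqrt_sqrt _ (Hw i Hi)) at 1. ring.
Qed.

Lemma L_dis_setW_ext N K s W W' :
  (forall k l, (k < K)%nat -> (l < K)%nat -> W k l = W' k l) ->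
  L_dis N K (setW s W) = L_dis N K (setW s W').
Proof.
  intros HWW'. apply sumR_ext; intros i _. apply sumR_ext; intros k Hk.
  simpl; unfold mmulT.
  rewrite (sumR_ext K (fun m => sU s i m * W k m) (fun m => sU s i m * W' k m))
    by (intros; rewrite HWW' by assumption; reflexivity).
  reflexivity.
Qed.

Lemma L_dis_procrustes N K s X Sig Y :
  orthogonal K (sW s) -> is_svd K (GbarT_Ubar N s) X Sig Y ->
  (forall i, (i < N)%nat -> 0 < sO3 s i <= 1) ->
  L_dis N K (setW s (mmulT K X Y)) <= L_dis N K s.
Proof.
  intros HW Hsvd HO.
  assert (Hw : forall i, (i < N)%nat -> 0 <= ln (1 / sO3 s i))
    by (intros; apply ln_inv_ge0, HO; assumption).
  rewrite (L_dis_expand N K s), (L_dis_expand N K (setW s (mmulT K X Y))) by exact Hw.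
  simpl.
  assert (Hquad : sumR N (fun i => ln (1 / sO3 s i) * sqnorm K (mmulT K (sU s) (mmulT K X Y) i))
              <= sumR N (fun i => ln (1 / sO3 s i) * sqnorm K (mmulT K (sU s) (sW s) i))).
  { destruct Hsvd as (HX & HY & _).
    apply sumR_le; intros i Hi. apply Rmult_le_compat_l; [exact (Hw i Hi)|].
    rewrite !sqnorm_mmulT_row, (sqnorm_mxv_orthogonal K (sW s)) by exact HW.
    apply sqnorm_mxv_mmulT_le; assumption. }
  pose proof (procrustes K _ X Sig Y (sW s) Hsvd HW) as Hcross.
  unfold setW, GbarT_Ubar, Gbar, Ubar in *; simpl in *. lra.
Qed.

Lemma L_dis_W_update_le N K s W' :
  orthogonal K (sW s) -> W_update N K s W' ->
  (forall i, (i < N)%nat -> 0 < sO3 s i <= 1) ->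
  L_dis N K (setW s W') <= L_dis N K s.
Proof.
  intros HW (X & Sig & Y & Hsvd & HW') HO.
  rewrite (L_dis_setW_ext N K s W' (mmulT K X Y)) by exact HW'.
  exact (L_dis_procrustes N K s X Sig Y HW Hsvd HO).
Qed.

Lemma Loss_setW_le N D K A C alpha beta s W' : 0 <= beta ->
  orthogonal K (sW s) -> W_update N K s W' ->
  (forall i, (i < N)%nat -> 0 < sO3 s i <= 1) ->
  Loss N D K A C alpha beta (setW s W') <= Loss N D K A C alpha beta s.
Proof.
  intros Hb HW HW' HO. unfold Loss.
  pose proof (L_dis_W_update_le N K s W' HW HW' HO).
  change (L_str N K A (setW s W')) with (L_str N K A s).
  change (L_attr N D K C (setW s W')) with (L_attr N D K C s).
  nra.
Qed.

Definition getc (s : state) (c : coord) : R :=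
  match c with
  | cG a b => sG s a b | cH a b => sH s a b | cU a b => sU s a b | cV a b => sV s a b
  end.

Lemma upd_id M a b : upd M a b (M a b) = M.
Proof.
  extensionality i; extensionality j. unfold upd.
  destruct (Nat.eqb_spec i a) as [->|], (Nat.eqb_spec j b) as [->|]; reflexivity.
Qed.

Lemma setc_getc s c : setc s c (getc s c) = s.
Proof. destruct s, c; simpl; rewrite upd_id; reflexivity. Qed.

Lemma cd_chain_le f s cs s' : cd_chain f s cs s' -> f s' <= f s.
Proof.
  induction 1 as [s|s c cs x s' Hmin _ IH]; [lra|].
  pose proof (Hmin (getc s c)) as Hstay. rewrite setc_getc in Hstay. lra.
Qed.

Lemma cd_chain_scores f s cs s' : cd_chain f s cs s' ->
  sO1 s' = sO1 s /\ sO2 s' = sO2 s /\ sO3 s' = sO3 s.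
Proof.
  induction 1 as [s|s c cs x s' _ _ (E1 & E2 & E3)]; [auto|].
  destruct c; exact (conj E1 (conj E2 E3)).
Qed.

Lemma ln_inv_sub_ge p o : 0 < p -> 0 < o -> 1 - o / p <= ln (1 / o) - ln (1 / p).
Proof.
  intros Hp Ho.
  assert (Hop : ln (o / p) = ln o - ln p).
  { unfold Rdiv. rewrite ln_mult, ln_Rinv by (try apply Rinv_0_lt_compat; assumption).
    ring. }
  unfold Rdiv at 2 3. rewrite !Rmult_1_l, !ln_Rinv by assumption.
  pose proof (ln_le_sub_1 (o / p) (Rdiv_lt_0_compat o p Ho Hp)). lra.
Qed.

Lemma gibbs_inequality N m r O : 0 < m ->
  (forall i, (i < N)%nat -> 0 < r i) -> (forall i, (i < N)%nat -> 0 < O i) ->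
  sumR N O = m ->
  sumR N (fun i => ln (1 / (m * r i / sumR N r)) * r i)
    <= sumR N (fun i => ln (1 / O i) * r i).
Proof.
  intros Hm Hr HO HOm.
  destruct N as [|n]; [simpl; lra|]. set (N := S n) in *.
  assert (Htot : 0 < sumR N r) by (apply sumR_gt0; [unfold N; lia|exact Hr]).
  set (tot := sumR N r) in *.
  assert (Hbal : sumR N (fun i => r i - tot / m * O i) = 0).
  { rewrite sumR_sub, sumR_mull, HOm. fold tot. field. lra. }
  assert (Hpt : sumR N (fun i => r i - tot / m * O i)
            <= sumR N (fun i => ln (1 / O i) * r i - ln (1 / (m * r i / tot)) * r i)).
  { apply sumR_le; intros i Hi. pose proof (Hr i Hi). pose proof (HO i Hi).
    assert (Hp : 0 < m * r i / tot) by (apply Rdiv_lt_0_compat; nra).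
    pose proof (ln_inv_sub_ge _ _ Hp (HO i Hi)) as Hln.
    assert (Hrat : r i * (1 - O i / (m * r i / tot)) = r i - tot / m * O i) by (field; lra).
    rewrite <- Hrat.
    replace (ln (1 / O i) * r i - ln (1 / (m * r i / tot)) * r i)
      with (r i * (ln (1 / O i) - ln (1 / (m * r i / tot)))) by ring.
    apply Rmult_le_compat_l; [lra | exact Hln]. }
  rewrite Hbal, sumR_sub in Hpt. lra.
Qed.

Lemma L_str_rows N K A s :
  L_str N K A s = sumR N (fun i => ln (1 / sO1 s i) * res_str N K A s i).
Proof. apply sumR_ext; intros; apply sumR_mull. Qed.

Lemma L_attr_rows N D K C s :
  L_attr N D K C s = sumR N (fun i => ln (1 / sO2 s i) * res_attr D K C s i).
Proof. apply sumR_ext; intros; apply sumR_mull. Qed.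

Lemma L_dis_rows N K s :
  L_dis N K s = sumR N (fun i => ln (1 / sO3 s i) * res_dis K s i).
Proof. apply sumR_ext; intros; apply sumR_mull. Qed.

Lemma Loss_O_update_le N D K A C alpha beta s : 0 <= alpha -> 0 <= beta ->
  feasible_scores N (sO1 s) -> feasible_scores N (sO2 s) -> feasible_scores N (sO3 s) ->
  (forall i, (i < N)%nat -> 0 < res_str N K A s i) ->
  (forall i, (i < N)%nat -> 0 < res_attr D K C s i) ->
  (forall i, (i < N)%nat -> 0 < res_dis K s i) ->
  Loss N D K A C alpha beta (O_update N D K A C s) <= Loss N D K A C alpha beta s.
Proof.
  intros Ha Hb [HO1 HS1] [HO2 HS2] [HO3 HS3] Hr1 Hr2 Hr3.
  assert (Hmu : 0 < mu) by (unfold mu; lra).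
  assert (L_str N K A (O_update N D K A C s) <= L_str N K A s).
  { rewrite !L_str_rows. exact (gibbs_inequality N mu _ _ Hmu Hr1 (fun i Hi => proj1 (HO1 i Hi)) HS1). }
  assert (L_attr N D K C (O_update N D K A C s) <= L_attr N D K C s).
  { rewrite !L_attr_rows. exact (gibbs_inequality N mu _ _ Hmu Hr2 (fun i Hi => proj1 (HO2 i Hi)) HS2). }
  assert (L_dis N K (O_update N D K A C s) <= L_dis N K s).
  { rewrite !L_dis_rows. exact (gibbs_inequality N mu _ _ Hmu Hr3 (fun i Hi => proj1 (HO3 i Hi)) HS3). }
  unfold Loss. nra.
Qed.

Theorem mainTheorem1 (N D K : nat) (A C : mat) (alpha beta : R)
  (s0 : state) (W1 : mat) (cs : list coord) (s2 : state) :
  (K < N)%nat -> (K < D)%nat -> 0 < alpha -> 0 < beta ->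
  orthogonal K (sW s0) ->
  feasible_scores N (sO1 s0) -> feasible_scores N (sO2 s0) ->
  feasible_scores N (sO3 s0) ->
  W_update N K s0 W1 ->
  NoDup cs -> (forall c, In c cs <-> valid_coord N D K c) ->
  cd_chain (Loss N D K A C alpha beta) (setW s0 W1) cs s2 ->
  (forall i, (i < N)%nat -> 0 < res_str N K A s2 i) ->
  (forall i, (i < N)%nat -> 0 < res_attr D K C s2 i) ->
  (forall i, (i < N)%nat -> 0 < res_dis K s2 i) ->
  Loss N D K A C alpha beta (O_update N D K A C s2)
    <= Loss N D K A C alpha beta s0.
Proof.
  intros _ _ Ha Hb HW0 HO1 HO2 HO3 HWu _ _ Hchain Hr1 Hr2 Hr3.
  assert (Hstep1 : Loss N D K A C alpha beta (setW s0 W1) <= Loss N D K A C alpha beta s0)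
    by (apply Loss_setW_le; [lra | exact HW0 | exact HWu | exact (proj1 HO3)]).
  pose proof (cd_chain_le _ _ _ _ Hchain) as Hstep2.
  assert (Hstep3 : Loss N D K A C alpha beta (O_update N D K A C s2)
                     <= Loss N D K A C alpha beta s2).
  { destruct (cd_chain_scores _ _ _ _ Hchain) as (E1 & E2 & E3); simpl in E1, E2, E3.
    rewrite <- E1 in HO1; rewrite <- E2 in HO2; rewrite <- E3 in HO3.
    apply Loss_O_update_le; assumption || lra. }
  lra.
Qed.
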